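(* Fix subgroups $s\neq s'$, a cohort $g\in\{1,\dots,\mathcal T\}$ and $t$ with $g\le t\le\mathcal T$, and assume all potential outcomes are integrable and $P(G=g,S=\sigma)>0$ for $\sigma\in\{s,s'\}$. Suppose (No subgroup selection) $$\mathbb E[Y_t(g;s')-Y_t(\infty;s')\mid G=g,S=s]=\mathbb E[Y_t(g;s')-Y_t(\infty;s')\mid G=g,S=s'].$$ Then $CDATT_{s-s'}(g,t)=DATT_{s-s'}(g,t)$. Consequently, if in addition the hypotheses of part (a) (resp. (b)) below hold, then $CDATT_{s-s'}(g,t)$ equals $$\mathbb E[Y_t-Y_{g-1}\mid G=g,S=s]-\mathbb E[Y_t-Y_{g-1}\mid G=g,S=s']-\Big(\mathbb E[Y_t-Y_{g-1}\mid C,S=s]-\mathbb E[Y_t-Y_{g-1}\mid C,S=s']\Big),$$ where $C$ is the event $\{G>t\}$ (resp. $\{G=\infty\}$), assumed to satisfy $P(C,S=\sigma)>0$ for $\sigma\in\{s,s'\}$. The hypotheses are: (i) for every finite cohort $g'$, every $\tau<g'$ and every $\sigma$ with $P(G=g',S=\sigma)>0$, $\mathbb E[Y_\tau(g')\mid G=g',S=\sigma]=\mathbb E[Y_\tau(\infty)\mid G=g',S=\sigma]$; and (ii) $\mathbb E[Y_t(\infty)-Y_{g-1}(\infty)\mid G=g,S=s]-\mathbb E[Y_t(\infty)-Y_{g-1}(\infty)\mid G=g,S=s']=\mathbb E[Y_t(\infty)-Y_{g-1}(\infty)\mid C,S=s]-\mathbb E[Y_t(\infty)-Y_{g-1}(\infty)\mid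 C,S=s']$.
   Context: Time periods are $t=0,1,\dots,\mathcal T$; $\mathcal S$ is a finite set of subgroups. A unit is described by a random element consisting of: $G\in\{1,\dots,\mathcal T\}\cup\{\infty\}$, the first period in which the unit is treated ($G=\infty$ means never treated; treatment is irreversible); a subgroup $S\in\mathcal S$; covariates $X$; and real potential outcomes $Y_t(g';\sigma)$ for every period $t$, every possible cohort $g'$ (including $\infty$) and every $\sigma\in\mathcal S$, interpreted as the outcome at $t$ had the unit first been treated at $g'$ and belonged to subgroup $\sigma$. Write $Y_t(g'):=Y_t(g';S)$ and the observed outcome $Y_t:=Y_t(G;S)$. Units are i.i.d. (panel data). Define $$DATT_{s-s'}(g,t):=\mathbb E[Y_t(g)-Y_t(\infty)\mid G=g,S=s]-\mathbb E[Y_t(g)-Y_t(\infty)\mid G=g,S=s'],$$ $$CDATT_{s-s'}(g,t):=\mathbb E[Y_t(g;s)-Y_t(\infty;s)\mid G=g,S=s]-\mathbb E[Y_t(g;s')-Y_t(\infty;s')\mid G=g,S=s].$$ *)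

From HB Require Import structures.
From mathcomp Require Import all_boot all_order all_algebra.
From mathcomp Require Import all_classical all_reals all_analysis.
Set Implicit Arguments. Unset Strict Implicit. Unset Printing Implicit Defensive.
Import Order.TTheory GRing.Theory Num.Theory.
Local Open Scope classical_set_scope.
Local Open Scope ring_scope.

(* Cohorts: [Some k] = first treated at period k, [None] = never treated (infinity). *)
Definition cohort := option nat.

Definition valid_cohort (T : nat) (c : cohort) : Prop :=
  match c with None => True | Some k => (1 <= k <= T)%N end.

Definition cohort_gt (c : cohort) (t : nat) : bool :=
  match c with None => true | Some k => (t < k)%N end.

Section Defs.
Context {d : measure_display} {Omega : measurableType d} {R : realType}.

Definition condE (P : probability Omega R) (A : set Omega) (X : Omega -> R) : R :=
  Rintegral P A X / fine (P A).

Context {Sub : finType}.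

Definition evGS (G : Omega -> cohort) (S : Omega -> Sub) (c : cohort) (sg : Sub)
  : set Omega := [set w | G w = c /\ S w = sg].

Definition evCS (C : set Omega) (S : Omega -> Sub) (sg : Sub) : set Omega :=
  C `&` [set w | S w = sg].

(* Y t c sg w = Y_t(c; sg)(w). *)
Definition DATT (P : probability Omega R) (G : Omega -> cohort) (S : Omega -> Sub)
  (Y : nat -> cohort -> Sub -> Omega -> R) (s s' : Sub) (g t : nat) : R :=
  condE P (evGS G S (Some g) s) (fun w => Y t (Some g) (S w) w - Y t None (S w) w)
  - condE P (evGS G S (Some g) s') (fun w => Y t (Some g) (S w) w - Y t None (S w) w).

Definition CDATT (P : probability Omega R) (G : Omega -> cohort) (S : Omega -> Sub)
  (Y : nat -> cohort -> Sub -> Omega -> R) (s s' : Sub) (g t : nat) : R :=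
  condE P (evGS G S (Some g) s) (fun w => Y t (Some g) s w - Y t None s w)
  - condE P (evGS G S (Some g) s) (fun w => Y t (Some g) s' w - Y t None s' w).

Definition Yobs (G : Omega -> cohort) (S : Omega -> Sub)
  (Y : nat -> cohort -> Sub -> Omega -> R) (t : nat) : Omega -> R :=
  fun w => Y t (G w) (S w) w.

Definition DDD (P : probability Omega R) (G : Omega -> cohort) (S : Omega -> Sub)
  (Y : nat -> cohort -> Sub -> Omega -> R) (C : set Omega) (s s' : Sub) (g t : nat) : R :=
  let D := fun w => Yobs G S Y t w - Yobs G S Y g.-1 w in
  condE P (evGS G S (Some g) s) D - condE P (evGS G S (Some g) s') D
  - (condE P (evCS C S s) D - condE P (evCS C S s') D).

Definition no_anticipation (P : probability Omega R) (T : nat) (G : Omega -> cohort)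
  (S : Omega -> Sub) (Y : nat -> cohort -> Sub -> Omega -> R) : Prop :=
  forall g' : nat, (1 <= g' <= T)%N -> forall tau : nat, (tau < g')%N ->
  forall sg : Sub, (0 < P (evGS G S (Some g') sg))%E ->
    condE P (evGS G S (Some g') sg) (fun w => Y tau (Some g') (S w) w)
    = condE P (evGS G S (Some g') sg) (fun w => Y tau None (S w) w).

Definition parallel_trends (P : probability Omega R) (G : Omega -> cohort)
  (S : Omega -> Sub) (Y : nat -> cohort -> Sub -> Omega -> R) (C : set Omega)
  (s s' : Sub) (g t : nat) : Prop :=
  let D := fun w => Y t None (S w) w - Y g.-1 None (S w) w in
  condE P (evGS G S (Some g) s) D - condE P (evGS G S (Some g) s') D
  = condE P (evCS C S s) D - condE P (evCS C S s') D.

End Defs.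

From HB Require Import structures.
From mathcomp Require Import all_boot all_order all_algebra.
From mathcomp Require Import all_classical all_reals all_analysis.
From mathcomp Require Import measurable_realfun ring.
Set Implicit Arguments.
Unset Strict Implicit.
Unset Printing Implicit Defensive.
Import Order.TTheory GRing.Theory Num.Theory.
Local Open Scope classical_set_scope.
Local Open Scope ring_scope.

(* On {G = g, S = s'} the subgroup is s', so CDATT and DATT differ exactly by
   the selection bias that "no subgroup selection" rules out.  For the
   identification, no anticipation at period g - 1 splits the observed trend
   of cohort g into its treatment effect plus its untreated trend.  On the
   comparison event the observed trend already is the untreated trend:
   pointwise for the never treated, and for the not yet treated after
   splitting the event by cohort, because a cohort k > t is still untreated at
   both t and g - 1.  Parallel trends then cancel the untreated trends. *)

Section countable_fibers.
Context d (T : measurableType d) (I : countType) (f : T -> I).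
Hypothesis mf : forall i, measurable (f @^-1` [set i]).

Lemma measurable_preimage_countable (Q : set I) : measurable (f @^-1` Q).
Proof.
have -> : f @^-1` Q = \bigcup_i f @^-1` ([set i] `&` Q).
  apply/seteqP; split => [w Qfw|w [i _ /= [-> //]]].
  by exists (f w).
apply: countable_bigcupT_measurable; first exact: countableP.
move=> i; have [Qi|nQi] := pselect (Q i).
  by rewrite (_ : _ `&` Q = [set i]) //; apply/seteqP; split => [x [] | x ->].
rewrite (_ : _ `&` Q = set0) ?preimage_set0 //.
by apply/seteqP; split => // x [-> ?].
Qed.

Lemma measurable_fun_fibers d' (T' : measurableType d') (D : set T) (h : T -> T') :
  (forall i, measurable_fun (D `&` f @^-1` [set i]) h) -> measurable_fun D h.
Proof.
move=> mh mD B mB.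
have -> : D `&` h @^-1` B = \bigcup_i ((D `&` f @^-1` [set i]) `&` h @^-1` B).
  apply/seteqP; split => [w [Dw Bw]|w [i _ [[Dw _] Bw]]] //.
  by exists (f w).
apply: countable_bigcupT_measurable; first exact: countableP.
by move=> i; apply: mh => //; exact: measurableI.
Qed.

End countable_fibers.

Section integral_fibers.
Context d (T : measurableType d) (R : realType) (mu : {measure set T -> \bar R}).
Context (I : choiceType) (f : T -> I).
Hypothesis mf : forall i, measurable (f @^-1` [set i]).

Lemma integral_fibers (L : seq I) (A : set T) (h : T -> R) :
  measurable A -> uniq L -> (forall w, A w -> f w \in L) ->
  measurable_fun A (EFin \o h) ->
  (\int[mu]_(x in A) (h x)%:E =
   \sum_(i <- L) \int[mu]_(x in A `&` f @^-1` [set i]) (h x)%:E)%E.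
Proof.
move=> mA uL AL mh.
have eA : A = \big[setU/set0]_(i <- L) (A `&` f @^-1` [set i]).
  rewrite -(bigcup_seq L (fun i => A `&` f @^-1` [set i])).
  apply/seteqP; split => [w Aw|w [i _ []]] //.
  by exists (f w) => //=; exact: AL.
rewrite [in LHS]eA integral_bigsetU_EFin -?eA //.
- by move=> i; exact: measurableI.
- apply/trivIsetP => i j _ _ /eqP ij; apply/seteqP; split => // x.
  by move=> [[_ /= fxi] [_ /= fxj]]; apply: ij; rewrite -fxi -fxj.
Qed.

Lemma EFin_Rintegral (A : set T) (h : T -> R) :
  measurable A -> mu.-integrable A (EFin \o h) ->
  (Rintegral mu A h)%:E = (\int[mu]_(x in A) (h x)%:E)%E.
Proof. by move=> mA hi; rewrite /Rintegral fineK //; exact: integrable_fin_num. Qed.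

End integral_fibers.

Section conditional_expectation.
Context d (Omega : measurableType d) (R : realType) (P : probability Omega R).
Implicit Types (A : set Omega) (f h : Omega -> R).

Lemma eq_condE A f h : {in A, f =1 h} -> condE P A f = condE P A h.
Proof. by move=> fh; rewrite /condE (eq_Rintegral _ fh). Qed.

Lemma condEB A f h : measurable A ->
  P.-integrable A (EFin \o f) -> P.-integrable A (EFin \o h) ->
  condE P A (fun w => f w - h w) = condE P A f - condE P A h.
Proof. by move=> mA fi hi; rewrite /condE RintegralB // mulrBl. Qed.

Lemma Rintegral_eq_of_condE A f h : measurable A ->
  measurable_fun A f -> measurable_fun A h ->
  ((0 < P A)%E -> condE P A f = condE P A h) ->
  Rintegral P A f = Rintegral P A h.
Proof.
move=> mA mf mh fh; have [PA0|PAn0] := eqVneq (P A) 0%E.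
  by rewrite /Rintegral !null_set_integral //; exact/measurable_EFinP.
have PA_gt0 : (0 < P A)%E by rewrite lt0e PAn0 measure_ge0.
have fPA_gt0 : 0 < fine (P A).
  by rewrite fine_gt0 // PA_gt0 (le_lt_trans (probability_le1 P mA)) ?ltry.
move: (fh PA_gt0); rewrite /condE => /(congr1 ( *%R^~ (fine (P A)))).
by rewrite !divfK ?gt_eqF.
Qed.

End conditional_expectation.

Section staggered_adoption.
Context d (Omega : measurableType d) (R : realType) (P : probability Omega R).
Context (Sub : finType) (T : nat) (G : Omega -> cohort) (S : Omega -> Sub).
Context (Y : nat -> cohort -> Sub -> Omega -> R).
Hypothesis HGval : forall w, valid_cohort T (G w).
Hypothesis HGmeas : forall c : cohort, measurable (G @^-1` [set c]).
Hypothesis HSmeas : forall sg : Sub, measurable (S @^-1` [set sg]).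
Hypothesis Hint : forall t : nat, (t <= T)%N -> forall c : cohort,
  valid_cohort T c -> forall sg : Sub, P.-integrable setT (EFin \o Y t c sg).

Definition observed_trend (t1 t0 : nat) : Omega -> R :=
  fun w => Yobs G S Y t1 w - Yobs G S Y t0 w.

Definition untreated_trend (t1 t0 : nat) : Omega -> R :=
  fun w => Y t1 None (S w) w - Y t0 None (S w) w.

Lemma measurable_evGS c sg : measurable (evGS G S c sg).
Proof. exact: (measurableI _ _ (HGmeas c) (HSmeas sg)). Qed.

Lemma integrable_outcome A tau c sg : measurable A -> (tau <= T)%N ->
  valid_cohort T c -> P.-integrable A (EFin \o Y tau c sg).
Proof. by move=> mA tauT vc; apply: integrableS (Hint tauT vc sg). Qed.

Lemma measurable_outcome (C : Omega -> cohort) tau : (tau <= T)%N ->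
  (forall w, valid_cohort T (C w)) -> (forall c, measurable (C @^-1` [set c])) ->
  measurable_fun setT (fun w => Y tau (C w) (S w) w).
Proof.
move=> tauT vC mC.
have mCS (i : cohort * Sub) : measurable ((fun w => (C w, S w)) @^-1` [set i]).
  case: i => c sg; rewrite (_ : _ @^-1` _ = C @^-1` [set c] `&` S @^-1` [set sg]).
    exact: measurableI.
  by apply/seteqP; split => w /= [-> ->].
apply: (measurable_fun_fibers mCS) => -[c sg]; rewrite setTI.
have [vc|nvc] := pselect (valid_cohort T c); last first.
  rewrite (_ : _ @^-1` _ = set0); first exact: measurable_fun_set0.
  by apply/seteqP; split => // w /= [Cw _]; apply: nvc; rewrite -Cw.
apply: (eq_measurable_fun (Y tau c sg)).
  by move=> w; rewrite inE => -[-> ->].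
apply/measurable_EFinP; apply: measurable_int (integrable_outcome _ _ _ _) => //.
Qed.

Lemma measurable_observed_trend t1 t0 : (t1 <= T)%N -> (t0 <= T)%N ->
  measurable_fun setT (observed_trend t1 t0).
Proof. by move=> t1T t0T; apply: measurable_funB; exact: measurable_outcome. Qed.

Lemma measurable_untreated_trend t1 t0 : (t1 <= T)%N -> (t0 <= T)%N ->
  measurable_fun setT (untreated_trend t1 t0).
Proof.
have mN c : measurable ((fun=> None : cohort) @^-1` [set c] : set Omega).
  by rewrite preimage_cst; case: ifP.
move=> t1T t0T.
by apply: measurable_funB; exact: (measurable_outcome (C := fun=> None)).
Qed.

Lemma Rintegral_pre_treatment k sg tau :
  no_anticipation P T G S Y -> (1 <= k <= T)%N -> (tau < k)%N ->
  Rintegral P (evGS G S (Some k) sg) (Y tau (Some k) sg)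
  = Rintegral P (evGS G S (Some k) sg) (Y tau None sg).
Proof.
move=> NA kT tauk; have tauT : (tau <= T)%N.
  by rewrite (leq_trans (ltnW tauk)) //; case/andP: kT.
have mA := measurable_evGS (Some k) sg.
have mY c : valid_cohort T c -> measurable_fun (evGS G S (Some k) sg) (Y tau c sg).
  move=> vc; apply/measurable_EFinP.
  exact: measurable_int (integrable_outcome sg mA tauT vc).
apply: Rintegral_eq_of_condE => // [||PA]; [exact: mY|exact: mY|].
have onA c : {in evGS G S (Some k) sg, (fun w => Y tau c (S w) w) =1 Y tau c sg}.
  by move=> w; rewrite inE => -[_ ->].
by rewrite -!(eq_condE P (onA _)); exact: NA.
Qed.

Lemma integral_observed_trend_pre_treatment k sg t1 t0 :
  no_anticipation P T G S Y -> (1 <= k <= T)%N -> (t1 < k)%N -> (t0 < k)%N ->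
  (\int[P]_(x in evGS G S (Some k) sg) (observed_trend t1 t0 x)%:E
   = \int[P]_(x in evGS G S (Some k) sg) (untreated_trend t1 t0 x)%:E)%E.
Proof.
move=> NA kT t1k t0k; have /andP[_ kT'] := kT.
have mA := measurable_evGS (Some k) sg.
have [t1T t0T] := (leq_trans (ltnW t1k) kT', leq_trans (ltnW t0k) kT').
have vk : valid_cohort T (Some k) by [].
have i1k := integrable_outcome sg mA t1T vk.
have i0k := integrable_outcome sg mA t0T vk.
have vN : valid_cohort T None by [].
have i1N := integrable_outcome sg mA t1T vN.
have i0N := integrable_outcome sg mA t0T vN.
rewrite (eq_integral (fun x => (Y t1 (Some k) sg x - Y t0 (Some k) sg x)%:E));
  last first.
  by move=> w; rewrite inE => -[Gw Sw]; rewrite /observed_trend /Yobs Gw Sw.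
rewrite [RHS](eq_integral (fun x => (Y t1 None sg x - Y t0 None sg x)%:E));
  last first.
  by move=> w; rewrite inE => -[_ Sw]; rewrite /untreated_trend Sw.
rewrite !integralB_EFin // -!EFin_Rintegral //.
by rewrite !Rintegral_pre_treatment.
Qed.

Lemma condE_treated_observed_trend g t sg :
  no_anticipation P T G S Y -> (1 <= g)%N -> (g <= t <= T)%N ->
  condE P (evGS G S (Some g) sg) (observed_trend t g.-1)
  = condE P (evGS G S (Some g) sg)
      (fun w => Y t (Some g) (S w) w - Y t None (S w) w)
  + condE P (evGS G S (Some g) sg) (untreated_trend t g.-1).
Proof.
move=> NA g1 /andP[gt tT]; have gT := leq_trans gt tT.
have g1T : (g.-1 <= T)%N by rewrite (leq_trans (leq_pred g)).
set A := evGS G S (Some g) sg; have mA : measurable A := measurable_evGS _ _.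
have [vg vN] : valid_cohort T (Some g) /\ valid_cohort T None by rewrite /= g1 gT.
have itg := integrable_outcome sg mA tT vg.
have itN := integrable_outcome sg mA tT vN.
have ig1g := integrable_outcome sg mA g1T vg.
have ig1N := integrable_outcome sg mA g1T vN.
rewrite (eq_condE P (f := observed_trend t g.-1)
  (h := fun w => Y t (Some g) sg w - Y g.-1 (Some g) sg w)); last first.
  by move=> w; rewrite inE => -[Gw Sw]; rewrite /observed_trend /Yobs Gw Sw.
rewrite (eq_condE P (f := fun w => Y t (Some g) (S w) w - Y t None (S w) w)
  (h := fun w => Y t (Some g) sg w - Y t None sg w)); last first.
  by move=> w; rewrite inE => -[_ ->].
rewrite (eq_condE P (f := untreated_trend t g.-1)
  (h := fun w => Y t None sg w - Y g.-1 None sg w)); last first.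
  by move=> w; rewrite inE => -[_ Sw]; rewrite /untreated_trend Sw.
have pre : condE P A (Y g.-1 (Some g) sg) = condE P A (Y g.-1 None sg).
  by rewrite /condE Rintegral_pre_treatment // ?g1 ?gT // prednK.
by rewrite !condEB // pre addrA subrK.
Qed.

Lemma condE_never_treated_observed_trend t1 t0 sg :
  condE P (evCS [set w | G w = None] S sg) (observed_trend t1 t0)
  = condE P (evCS [set w | G w = None] S sg) (untreated_trend t1 t0).
Proof.
apply: eq_condE => w; rewrite inE => -[/= Gw _].
by rewrite /observed_trend /Yobs Gw.
Qed.

Lemma condE_not_yet_treated_observed_trend t t0 sg :
  no_anticipation P T G S Y -> (t0 <= t <= T)%N ->
  condE P (evCS [set w | cohort_gt (G w) t] S sg) (observed_trend t t0)
  = condE P (evCS [set w | cohort_gt (G w) t] S sg) (untreated_trend t t0).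
Proof.
move=> NA /andP[t0t tT]; have t0T := leq_trans t0t tT.
set A := evCS _ S sg.
have mA : measurable A.
  apply: measurableI (HSmeas sg).
  exact: (measurable_preimage_countable HGmeas [set c | cohort_gt c t]).
set L := None :: [seq Some k | k <- iota t.+1 (T - t)].
have uL : uniq L.
  by rewrite /= (map_inj_uniq (@Some_inj _)) iota_uniq andbT; apply/mapP => -[].
have AL w : A w -> G w \in L.
  move=> [/= tk _]; move: (HGval w) tk.
  case: (G w) => [k /andP[_ kT] /= tk|_ _]; last by rewrite inE.
  by rewrite inE /= (mem_map (@Some_inj _)) mem_iota addSn subnKC // ltnS tk kT.
have mE (f : Omega -> R) : measurable_fun setT f -> measurable_fun A (EFin \o f).
  by move=> mf; apply/measurable_EFinP; exact: measurable_funS mf.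
rewrite /condE /Rintegral !(integral_fibers P HGmeas mA uL AL); last 2 first.
- by apply: mE; exact: measurable_untreated_trend.
- by apply: mE; exact: measurable_observed_trend.
congr (fine _ / _); apply: eq_big_seq => -[k|] kL; last first.
  apply: eq_integral => w; rewrite inE => -[_ /= Gw].
  by rewrite /observed_trend /untreated_trend /Yobs Gw.
move: kL; rewrite inE /= (mem_map (@Some_inj _)) mem_iota addSn subnKC // ltnS.
move=> /andP[tk kT].
have -> : A `&` G @^-1` [set Some k] = evGS G S (Some k) sg.
  apply/seteqP; split => w; first by move=> [[_ Sw] Gw].
  by move=> [Gw Sw]; split => //; split => //; rewrite /= Gw.
apply: integral_observed_trend_pre_treatment => //.
- by rewrite kT (leq_trans _ tk).
- exact: leq_ltn_trans t0t tk.
Qed.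

Lemma CDATT_eq_DATT s s' g t :
  condE P (evGS G S (Some g) s) (fun w => Y t (Some g) s' w - Y t None s' w)
  = condE P (evGS G S (Some g) s') (fun w => Y t (Some g) s' w - Y t None s' w) ->
  CDATT P G S Y s s' g t = DATT P G S Y s s' g t.
Proof.
move=> no_selection; rewrite /CDATT /DATT no_selection.
by congr (_ - _); apply: eq_condE => w; rewrite inE => -[_ ->].
Qed.

Lemma CDATT_eq_DDD (C : set Omega) s s' g t :
  no_anticipation P T G S Y -> (1 <= g)%N -> (g <= t <= T)%N ->
  (forall sg, condE P (evCS C S sg) (observed_trend t g.-1)
              = condE P (evCS C S sg) (untreated_trend t g.-1)) ->
  parallel_trends P G S Y C s s' g t ->
  CDATT P G S Y s s' g t = DATT P G S Y s s' g t ->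
  CDATT P G S Y s s' g t = DDD P G S Y C s s' g t.
Proof.
move=> NA g1 gtT comparison PT ->.
rewrite /DDD /= !comparison !condE_treated_observed_trend // -PT /DATT.
by ring.
Qed.

End staggered_adoption.

Theorem proposition2 (d : measure_display) (Omega : measurableType d) (R : realType)
  (P : probability Omega R) (Sub : finType) (T : nat)
  (G : Omega -> cohort) (S : Omega -> Sub) (Y : nat -> cohort -> Sub -> Omega -> R)
  (HGval : forall w, valid_cohort T (G w))
  (HGmeas : forall c : cohort, measurable (G @^-1` [set c]))
  (HSmeas : forall sg : Sub, measurable (S @^-1` [set sg]))
  (Hint : forall t : nat, (t <= T)%N -> forall c : cohort, valid_cohort T c ->
     forall sg : Sub, P.-integrable setT (EFin \o Y t c sg))
  (s s' : Sub) (g t : nat)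
  (Hss : s != s')
  (Hg : (1 <= g <= T)%N) (Ht : (g <= t <= T)%N)
  (Hps : (0 < P (evGS G S (Some g) s))%E) (Hps' : (0 < P (evGS G S (Some g) s'))%E)
  (Hnss : condE P (evGS G S (Some g) s) (fun w => Y t (Some g) s' w - Y t None s' w)
        = condE P (evGS G S (Some g) s') (fun w => Y t (Some g) s' w - Y t None s' w)) :
  CDATT P G S Y s s' g t = DATT P G S Y s s' g t
  /\ (let C := [set w | cohort_gt (G w) t] in
      (0 < P (evCS C S s))%E -> (0 < P (evCS C S s'))%E ->
      no_anticipation P T G S Y -> parallel_trends P G S Y C s s' g t ->
      CDATT P G S Y s s' g t = DDD P G S Y C s s' g t)
  /\ (let C := [set w | G w = None] in
      (0 < P (evCS C S s))%E -> (0 < P (evCS C S s'))%E ->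
      no_anticipation P T G S Y -> parallel_trends P G S Y C s s' g t ->
      CDATT P G S Y s s' g t = DDD P G S Y C s s' g t).
Proof.
have g1 : (1 <= g)%N by case/andP: Hg.
have CDATT_DATT := CDATT_eq_DATT Hnss.
have g1t : (g.-1 <= t <= T)%N by rewrite (leq_trans (leq_pred g)) //; case/andP: Ht.
split; first exact: CDATT_DATT.
split => C _ _ NA PT; apply: (CDATT_eq_DDD HGmeas HSmeas Hint) => //.
- by move=> sg; apply: condE_not_yet_treated_observed_trend.
- by move=> sg; exact: condE_never_treated_observed_trend.
Qed.
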